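(* Let $\phi\colon(\Gamma_1,X_1)\to(\Gamma_2,X_2)$ be a morphism in $\mathsf{SpatG}$. Define $\operatorname{Germ}(\phi)\colon\operatorname{Germ}(\Gamma_1,X_1)\to\operatorname{Germ}(\Gamma_2,X_2)$ by $\operatorname{Germ}(\phi)([\gamma,x])=[\gamma',\phi(x)]$, where $\gamma'\in\Gamma_2$ is any element with $\phi\circ\gamma=\gamma'\circ\phi$. Then $\operatorname{Germ}(\phi)$ is a well-defined étale homomorphism, and the assignments $(\Gamma,X)\mapsto\operatorname{Germ}(\Gamma,X)$, $\phi\mapsto\operatorname{Germ}(\phi)$ form a covariant functor $\mathsf{SpatG}\to\mathsf{Gpoid}$.
   Context: A Boolean space is a Hausdorff space with a basis of compact open sets; $\operatorname{Homeo}_c(X)$ is the set of homeomorphisms of $X$ whose support (closure of moved points) is compact open. The category $\mathsf{SpatG}$ has objects $(\Gamma,X)$ with $X$ Boolean and $\Gamma$ a subgroup of $\operatorname{Homeo}(X)$ contained in $\operatorname{Homeo}_c(X)$; a morphism $(\Gamma_1,X_1)\to(\Gamma_2,X_2)$ is a local homeomorphism $\phi\colon X_1\to X_2$ such that for each $\gamma\in\Gamma_1$ there is $\gamma'\in\Gamma_2$ with $\phi\circ\gamma=\gamma'\circ\phi$. The category $\mathsf{Gpoid}$ has objects ample (étale, unit space Hausdorff with basis of compact opens), effective (interior of isotropy equals unit space), Hausdorff groupoids, and morphisms étale homomorphisms (groupoid homomorphisms that are local homeomorphisms). The groupoid of germs $\operatorname{Germ}(\Gamma,X)$ is $\Gamma\times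 X$ modulo $(\gamma,x)\sim(\tau,y)$ iff $x=y$ and $\gamma,\tau$ agree near $x$; classes $[\gamma,x]$ with $s[\gamma,x]=x$, $r[\gamma,x]=\gamma(x)$, $[\tau,\gamma(x)][\gamma,x]=[\tau\gamma,x]$, $[\gamma,x]^{-1}=[\gamma^{-1},\gamma(x)]$, unit space $X$, topology with basis $\{[\gamma,x]:x\in A\}$ for $\gamma\in\Gamma$, $A$ open. *)

From HB Require Import structures.
From mathcomp Require Import all_boot all_order.
From mathcomp Require Import boolp classical_sets functions topology.

Set Implicit Arguments.
Unset Strict Implicit.
Unset Printing Implicit Defensive.

Local Open Scope classical_set_scope.

Definition boolean_space (X : topologicalType) : Prop :=
  hausdorff_space X /\
  (forall (x : X) (U : set X), open U -> U x ->
     exists V : set X, [/\ open V, compact V, V x & V `<=` U]).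

Definition is_homeo (X : topologicalType) (f : X -> X) : Prop :=
  exists g : X -> X, [/\ cancel f g, cancel g f, continuous f & continuous g].

Definition supp (X : topologicalType) (f : X -> X) : set X :=
  closure [set x | f x <> x].

Definition homeo_c (X : topologicalType) (f : X -> X) : Prop :=
  [/\ is_homeo f, compact (supp f) & open (supp f)].

Record spatG (X : topologicalType) := SpatG {
  sg_set : set (X -> X);
  sg_homeo_c : forall g, sg_set g -> homeo_c g;
  sg_id : sg_set id;
  sg_comp : forall g h, sg_set g -> sg_set h -> sg_set (g \o h);
  sg_inv : forall g, sg_set g -> exists h, [/\ sg_set h, cancel g h & cancel h g]
}.

Definition local_homeo (A B : topologicalType) (f : A -> B) : Prop :=
  forall a : A, exists U : set A,
    [/\ open U, U a, open (f @` U) &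
      exists g : B -> A,
        [/\ (forall y, U y -> g (f y) = y),
            (forall z, (f @` U) z -> f (g z) = z),
            {within U, continuous f} &
            {within f @` U, continuous g}]].

Definition spatG_hom (X1 X2 : topologicalType) (G1 : spatG X1) (G2 : spatG X2)
    (phi : X1 -> X2) : Prop :=
  local_homeo phi /\
  forall g, sg_set G1 g -> exists g', sg_set G2 g' /\ phi \o g = g' \o phi.

Section Germ.
Variables (X : topologicalType) (G : spatG X).

Definition gelt := {g : X -> X | sg_set G g}.

Definition germ_rel (p q : gelt * X) : Prop :=
  p.2 = q.2 /\ \forall y \near p.2, sval p.1 y = sval q.1 y.

(** Gamma x X modulo ~, as the type of equivalence classes *)
Definition germ := {S : set (gelt * X) | exists p, S = germ_rel p}.

Definition gclass (g : gelt) (x : X) : germ :=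
  exist _ (germ_rel (g, x)) (ex_intro _ (g, x) erefl).

Definition grep (a : germ) : gelt * X := projT1 (cid (proj2_sig a)).

Definition gel_id : gelt := exist _ id (sg_id G).
Definition gel_comp (a b : gelt) : gelt :=
  exist _ (sval a \o sval b) (sg_comp (proj2_sig a) (proj2_sig b)).
Definition gel_inv (a : gelt) : gelt :=
  let h := cid (sg_inv (proj2_sig a)) in
  exist _ (projT1 h) (let: And3 H _ _ := projT2 h in H).

(** s[g,x] = x, r[g,x] = g x, [t, g x][g, x] = [t g, x], [g,x]^-1 = [g^-1, g x],
    units x = [id, x] *)
Definition germ_src (a : germ) : X := (grep a).2.
Definition germ_rng (a : germ) : X := sval (grep a).1 (grep a).2.
Definition germ_unit (x : X) : germ := gclass gel_id x.
Definition germ_mul (a b : germ) : germ :=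
  gclass (gel_comp (grep a).1 (grep b).1) (grep b).2.
Definition germ_inv (a : germ) : germ :=
  gclass (gel_inv (grep a).1) (germ_rng a).

Definition germ_basic : set (set germ) :=
  [set B | exists (g : gelt) (A : set X), open A /\ B = gclass g @` A].

End Germ.

HB.instance Definition _ (X : topologicalType) (G : spatG X) :=
  gen_eqMixin (germ G).
HB.instance Definition _ (X : topologicalType) (G : spatG X) :=
  gen_choiceMixin (germ G).
(** the topology generated by the basic sets *)
HB.instance Definition _ (X : topologicalType) (G : spatG X) :=
  @isSubBaseTopological.Build (germ G) (set (germ G)) (@germ_basic X G) id.

Record gpd_ops (G X : Type) := GpdOps {
  gsrc : G -> X; grng : G -> X; gunit : X -> G;
  gmul : G -> G -> G; (* meaningful on composable pairs *)
  ginv : G -> G }.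

Definition is_groupoid (G X : Type) (o : gpd_ops G X) : Prop :=
  [/\ (forall x, gsrc o (gunit o x) = x /\ grng o (gunit o x) = x),
      (forall g h, gsrc o g = grng o h ->
         gsrc o (gmul o g h) = gsrc o h /\ grng o (gmul o g h) = grng o g),
      (forall g h k, gsrc o g = grng o h -> gsrc o h = grng o k ->
         gmul o (gmul o g h) k = gmul o g (gmul o h k)),
      (forall g, gmul o g (gunit o (gsrc o g)) = g /\
                 gmul o (gunit o (grng o g)) g = g) &
      (forall g, [/\ gsrc o (ginv o g) = grng o g, grng o (ginv o g) = gsrc o g,
                   gmul o (ginv o g) g = gunit o (gsrc o g) &
                   gmul o g (ginv o g) = gunit o (grng o g)])].

Definition topological_groupoid (G X : topologicalType) (o : gpd_ops G X) : Prop :=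
  [/\ continuous (gsrc o), continuous (grng o), continuous (gunit o),
      continuous (ginv o) &
      {within [set p : G * G | gsrc o p.1 = grng o p.2],
        continuous (fun p : G * G => gmul o p.1 p.2)}].

Definition etale_groupoid (G X : topologicalType) (o : gpd_ops G X) : Prop :=
  [/\ is_groupoid o, topological_groupoid o & local_homeo (gsrc o)].

Definition ample_groupoid (G X : topologicalType) (o : gpd_ops G X) : Prop :=
  etale_groupoid o /\ boolean_space X.

Definition effective_groupoid (G X : topologicalType) (o : gpd_ops G X) : Prop :=
  interior [set g | gsrc o g = grng o g] = range (gunit o).

Definition gpoid_obj (G X : topologicalType) (o : gpd_ops G X) : Prop :=
  [/\ ample_groupoid o, effective_groupoid o & hausdorff_space G].

Definition gpd_hom (G1 X1 G2 X2 : Type) (o1 : gpd_ops G1 X1) (o2 : gpd_ops G2 X2)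
    (F : G1 -> G2) : Prop :=
  forall g h, gsrc o1 g = grng o1 h ->
    gsrc o2 (F g) = grng o2 (F h) /\ F (gmul o1 g h) = gmul o2 (F g) (F h).

Definition etale_hom (G1 X1 G2 X2 : topologicalType)
    (o1 : gpd_ops G1 X1) (o2 : gpd_ops G2 X2) (F : G1 -> G2) : Prop :=
  gpd_hom o1 o2 F /\ local_homeo F.

Definition germ_gpd (X : topologicalType) (G : spatG X) : gpd_ops (germ G) X :=
  GpdOps (@germ_src X G) (@germ_rng X G) (@germ_unit X G) (@germ_mul X G)
         (@germ_inv X G).

Definition germ_map (X1 X2 : topologicalType) (G1 : spatG X1) (G2 : spatG X2)
    (phi : X1 -> X2) (a : germ G1) : germ G2 :=
  let p := grep a in
  match pselect (exists g' : gelt G2, phi \o sval p.1 = sval g' \o phi) with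
  | left h => gclass (projT1 (cid h)) (phi p.2)
  | right _ => gclass (gel_id G2) (phi p.2)
  end.
Arguments germ_map {X1 X2} G1 G2 phi%_function_scope a.

From HB Require Import structures.
From mathcomp Require Import all_boot all_order.
From mathcomp Require Import boolp classical_sets functions topology.

(* A germ [g, x] is determined by x and by the values of g near x, so for
   each g the map y |-> [g, y] is an open embedding of X onto a basic open set.
   In these charts the source map is the identity, the range map is g and
   Germ(phi) is phi; hence all structure maps are continuous, and the source
   map and Germ(phi) are local homeomorphisms, being continuous, open and
   locally injective.  Germ(phi) is well defined because phi is open: if g and
   h agree near x, any lifts of g and h agree on the image under phi of a
   neighbourhood of x.  The germ groupoid is Hausdorff because supports are
   open: if x lies in the support of h^-1 g, the basic neighbourhoods of
   [g, x] and [h, x] over that support are disjoint, since a common point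
   would be a point of the support near which h^-1 g is the identity;
   otherwise [g, x] = [h, x]. *)

Set Implicit Arguments.
Unset Strict Implicit.
Unset Printing Implicit Defensive.

Local Open Scope classical_set_scope.

Section LocalHomeomorphisms.
Variables A B : topologicalType.
Implicit Types f : A -> B.

Definition open_map f := forall x W, nbhs x W -> nbhs (f x) (f @` W).

Definition locally_injective f :=
  forall a, exists U : set A, [/\ open U, U a & {in U &, injective f}].

Lemma open_map_open f U : open_map f -> open U -> open (f @` U).
Proof.
move=> fo oU; rewrite openE => _ [x Ux <-]; apply: fo.
exact: open_nbhs_nbhs.
Qed.

Lemma near_open_map f (P : B -> Prop) x : open_map f ->
  (\forall y \near x, P (f y)) -> \forall z \near f x, P z.
Proof. by move=> fo /fo; apply: filterS => _ [y Py <-]. Qed.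

Lemma local_homeoP f :
  local_homeo f <-> [/\ continuous f, open_map f & locally_injective f].
Proof.
split=> [lf | [cf fo fi] a].
  have chart a : exists U, [/\ open U, U a, open (f @` U),
      {in U, continuous f} & exists g, [/\ {in U, cancel f g},
        {in f @` U, cancel g f} & {in f @` U, continuous g}]].
    have [U [oU Ua ofU [g [gK fK cf cg]]]] := lf a.
    exists U; split => //; first by rewrite -continuous_open_subspace.
    exists g; split; [by move=> y /set_mem /gK | by move=> z /set_mem /fK |].
    by rewrite -continuous_open_subspace.
  split.
  - by move=> a; have [U [_ Ua _ cf _]] := chart a; apply: cf; rewrite inE.
  - move=> a W nW; have [U [oU Ua ofU _ [g [gK fK cg]]]] := chart a.
    have fUa : (f @` U) (f a) by exists a.
    have nWU : nbhs (g (f a)) (W `&` U).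
      by rewrite gK ?inE //; apply: filterI => //; exact: open_nbhs_nbhs.
    have := cg _ (mem_set fUa) _ nWU; rewrite nbhs_simpl /=.
    have nfU : nbhs (f a) (f @` U) by exact: open_nbhs_nbhs.
    apply: filterS2 nfU => z fUz [Wgz _]; exists (g z) => //.
    by rewrite fK ?inE.
  - move=> a; have [U [oU Ua _ _ [g [gK _ _]]]] := chart a.
    by exists U; split => // y1 y2 /gK {2}<- /gK {2}<- ->.
have [U [oU Ua fU]] := fi a.
exists U; split => //; first exact: open_map_open.
exists ('pinv_(fun=> a) U f); split.
- by move=> y Uy; rewrite pinvKV ?inE.
- by move=> z fUz; rewrite pinvK ?inE.
- exact: continuous_subspaceT.
rewrite continuous_open_subspace; last exact: open_map_open.
move=> _ /set_mem [y Uy <-] W; rewrite /= pinvKV ?inE // => nW.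
have : nbhs (f y) (f @` (W `&` U)).
  by apply: fo; apply: filterI => //; exact: open_nbhs_nbhs.
by apply: filterS => _ [z [Wz Uz] <-]; rewrite /= pinvKV ?inE.
Qed.

End LocalHomeomorphisms.

Lemma open_map_id (A : topologicalType) : open_map (@id A).
Proof. by move=> x W; rewrite image_id. Qed.

Lemma open_map_comp (A B C : topologicalType) (f : A -> B) (g : B -> C) :
  open_map f -> open_map g -> open_map (g \o f).
Proof.
by move=> fo go x W /fo /go; rewrite image_comp.
Qed.

Lemma notin_suppE (X : topologicalType) (f : X -> X) x :
  ~ supp f x <-> \forall y \near x, f y = y.
Proof.
rewrite /supp -[~ _]/((~` closure _) x) -interiorC.
by split; apply: filterS => y /=; [exact: contrapT | move=> ->].
Qed.

Lemma intertwine_comp (A B : Type) (f : A -> B) a b a' b' :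
  f \o a = a' \o f -> f \o b = b' \o f -> f \o (a \o b) = (a' \o b') \o f.
Proof. by move=> ea eb; rewrite compA ea -compA eb. Qed.

Lemma intertwine_trans (A B C : Type) (f : A -> B) (h : B -> C) a b c :
  f \o a = b \o f -> h \o b = c \o h -> (h \o f) \o a = c \o (h \o f).
Proof. by move=> ef eh; rewrite -compA ef compA eh. Qed.

(* keeps [sval (gel_inv g)] folded, so that [gel_invK] still applies after [/=] *)
Arguments gel_inv : simpl never.

Section Germs.
Variables (X : topologicalType) (G : spatG X).
Implicit Types (p q r : gelt G * X) (a b : germ G) (g h : gelt G) (x y : X).

Lemma germ_rel_refl p : germ_rel p p.
Proof. by split=> //; apply: nearW. Qed.

Lemma germ_rel_sym p q : germ_rel p q -> germ_rel q p.
Proof. by case=> e pq; split=> //; rewrite -e; apply: filterS pq. Qed.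

Lemma germ_rel_trans p q r : germ_rel p q -> germ_rel q r -> germ_rel p r.
Proof.
case=> e pq [e' qr]; split; first by rewrite e.
by rewrite -e in qr; apply: filterS2 pq qr => y -> ->.
Qed.

Lemma gclass_eq g x h y :
  gclass g x = gclass h y <-> x = y /\ \forall z \near x, sval g z = sval h z.
Proof.
split=> [/(congr1 sval) /= gh | gh]; last first.
  have {}gh : germ_rel (g, x) (h, y) := gh.
  rewrite /gclass; apply: eq_exist; apply/funext => q; apply/propext.
  by split; apply: germ_rel_trans => //; exact: germ_rel_sym.
suff: germ_rel (h, y) (g, x) by move/germ_rel_sym.
by rewrite -gh; exact: germ_rel_refl.
Qed.

Lemma gclass_ext g h x : sval g = sval h -> gclass g x = gclass h x.
Proof. by move=> gh; apply/gclass_eq; split=> //; apply: nearW => z; rewrite gh. Qed.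

Lemma grepK a : gclass (grep a).1 (grep a).2 = a.
Proof.
case: a => S PS; apply: eq_exist; rewrite /grep /=.
by case: cid => -[g x] /= ->.
Qed.

Lemma germ_ind a : exists g x, a = gclass g x.
Proof. by exists (grep a).1, (grep a).2; rewrite grepK. Qed.

Lemma grep_gclass g x : (grep (gclass g x)).2 = x /\
  \forall z \near x, sval (grep (gclass g x)).1 z = sval g z.
Proof. by have /gclass_eq [e] := grepK (gclass g x); rewrite e. Qed.

Lemma gelt_continuous g : continuous (sval g).
Proof. by have [[k [_ _ gc _]] _ _] := sg_homeo_c (proj2_sig g). Qed.

Lemma near_gelt g x (P : X -> Prop) :
  (\forall z \near sval g x, P z) -> \forall y \near x, P (sval g y).
Proof. exact: gelt_continuous. Qed.

Lemma gel_invK g :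
  cancel (sval g) (sval (gel_inv g)) /\ cancel (sval (gel_inv g)) (sval g).
Proof. by rewrite /gel_inv /=; case: cid => k []. Qed.

Lemma germ_src_gclass g x : germ_src (gclass g x) = x.
Proof. by case: (grep_gclass g x). Qed.

Lemma germ_rng_gclass g x : germ_rng (gclass g x) = sval g x.
Proof. by rewrite /germ_rng; case: (grep_gclass g x) => -> /nbhs_singleton. Qed.

Lemma germ_mul_gclass g x h y : sval h y = x ->
  germ_mul (gclass g x) (gclass h y) = gclass (gel_comp g h) y.
Proof.
move=> <-{x}; rewrite /germ_mul; case: (grep_gclass h y) => -> eh.
apply/gclass_eq; split=> //; have [_ eg] := grep_gclass g (sval h y).
by apply: filterS2 (near_gelt eg) eh => z /= <- ->.
Qed.

Lemma germ_inv_gclass g x :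
  germ_inv (gclass g x) = gclass (gel_inv g) (sval g x).
Proof.
rewrite /germ_inv germ_rng_gclass; apply/gclass_eq; split=> //.
have [_ eg] := grep_gclass g x; have [gK Kg] := gel_invK g.
set k := (grep _).1 in eg *; have [kK _] := gel_invK k.
rewrite -{1}(gK x) in eg.
by apply: filterS (near_gelt eg) => z e; rewrite -{1}(Kg z) -e kK.
Qed.

End Germs.

Section GermGroupoid.
Variables (X : topologicalType) (G : spatG X).
Implicit Types (a : germ G) (g h : gelt G) (x y : X).

Lemma germ_basic_near B g x : germ_basic B -> B (gclass g x) ->
  \forall y \near x, B (gclass g y).
Proof.
move=> [k [A [oA ->]]] [x' Ax' /gclass_eq [<- kg]].
have nA : nbhs x' A by exact: open_nbhs_nbhs.
apply: filterS2 nA (nbhs_interior kg) => y Ay kgy.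
by exists y => //; apply/gclass_eq.
Qed.

Lemma germ_nbhsE g x (W : set (germ G)) :
  nbhs (gclass g x) W <-> \forall y \near x, W (gclass g y).
Proof.
split=> [|nW]; last first.
  have : nbhs x [set y | W (gclass g y)] := nW.
  rewrite nbhsE => -[A [oA Ax] AW].
  rewrite nbhsE; exists (gclass g @` A); last by move=> _ [y /AW ? <-].
  split; last by exists x.
  exists [set gclass g @` A]; last by rewrite bigcup_set1.
  by move=> _ ->; apply: (@finI_from1 _ _ _ id); exists g, A.
rewrite nbhsE => -[_ [[D DB <-] [C DC Cgx]] BW].
have [F FB eC] := DB _ DC.
have : \forall y \near x, C (gclass g y).
  rewrite -eC in Cgx *; apply: filter_bigI => i Fi.
  apply: germ_basic_near; last exact: Cgx.
  by have := FB _ Fi; rewrite inE.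
by apply: filterS => y Cgy; apply: BW; exists C.
Qed.

Lemma gclass_continuous g : continuous (gclass g).
Proof. by move=> x W /germ_nbhsE. Qed.

Lemma open_map_gclass g : open_map (gclass g).
Proof. by move=> x W nW; apply/germ_nbhsE; apply: filterS nW => y Wy; exists y. Qed.

Lemma germ_continuous (T : topologicalType) (F : germ G -> T) :
  (forall g, continuous (F \o gclass g)) -> continuous F.
Proof.
move=> cF a W; have [g [x ->]] := germ_ind a => /(cF g x) nW.
exact/germ_nbhsE.
Qed.

Lemma germ_open_map (T : topologicalType) (F : germ G -> T) :
  (forall g, open_map (F \o gclass g)) -> open_map F.
Proof.
move=> oF a W; have [g [x ->]] := germ_ind a => /germ_nbhsE /(oF g) /=.
by apply: filterS => _ [y Wgy <-]; exists (gclass g y).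
Qed.

Lemma germ_src_comp_gclass g : @germ_src X G \o gclass g = id.
Proof. by apply/funext => x; exact: germ_src_gclass. Qed.

Lemma germ_src_continuous : continuous (@germ_src X G).
Proof.
by apply: germ_continuous => g; rewrite germ_src_comp_gclass => x; exact: cvg_id.
Qed.

Lemma germ_src_local_homeo : local_homeo (@germ_src X G).
Proof.
apply/local_homeoP; split; first exact: germ_src_continuous.
  by apply: germ_open_map => g; rewrite germ_src_comp_gclass; exact: open_map_id.
move=> a; have [g [x ->]] := germ_ind a.
exists (range (gclass g)); split.
- exact: (open_map_open (open_map_gclass g) openT).
- by exists x.
- by move=> b c /set_mem [y _ <-] /set_mem [z _ <-]; rewrite !germ_src_gclass => ->.
Qed.

Lemma germ_is_groupoid : is_groupoid (germ_gpd G).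
Proof.
rewrite /germ_unit; split => /=.
- by move=> x; rewrite germ_src_gclass germ_rng_gclass.
- move=> a b; have [g [x ->]] := germ_ind a; have [h [y ->]] := germ_ind b.
  rewrite germ_src_gclass germ_rng_gclass => ->.
  by rewrite germ_mul_gclass // !germ_src_gclass !germ_rng_gclass.
- move=> a b c; have [g [x ->]] := germ_ind a; have [h [y ->]] := germ_ind b.
  have [k [z ->]] := germ_ind c.
  rewrite !germ_src_gclass !germ_rng_gclass => -> ->.
  by rewrite !germ_mul_gclass //; apply: gclass_ext.
- move=> a; have [g [x ->]] := germ_ind a.
  rewrite germ_src_gclass germ_rng_gclass !germ_mul_gclass //.
  by split; apply: gclass_ext.
- move=> a; have [g [x ->]] := germ_ind a; have [gK Kg] := gel_invK g.
  rewrite germ_inv_gclass !germ_src_gclass !germ_rng_gclass.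
  rewrite !germ_mul_gclass ?Kg //.
  by split=> //; apply: gclass_ext; apply/funext.
Qed.

Lemma germ_mul_continuous :
  {within [set p : germ G * germ G | germ_src p.1 = germ_rng p.2],
    continuous (fun p => germ_mul p.1 p.2)}.
Proof.
apply/subspace_continuousP => -[a b] /=.
have [g [x ->]] := germ_ind a; have [h [y ->]] := germ_ind b.
rewrite germ_src_gclass germ_rng_gclass => -> W.
rewrite /from_subspace /= germ_mul_gclass // => /germ_nbhsE nW.
pose V := gclass h @` [set z | W (gclass (gel_comp g h) z)].
have nV : nbhs (gclass h y) V by exact: open_map_gclass.
have nR : nbhs (gclass g (sval h y)) (range (gclass g)).
  by apply/germ_nbhsE; apply: nearW => z; exists z.
rewrite nbhs_simpl /within /=; exists (range (gclass g), V) => //.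
move=> [_ _] /= [[w _ <-] [z Wz <-]].
by rewrite germ_src_gclass germ_rng_gclass => ->; rewrite germ_mul_gclass.
Qed.

Lemma germ_topological : topological_groupoid (germ_gpd G).
Proof.
split => /=; last exact: germ_mul_continuous.
- exact: germ_src_continuous.
- apply: germ_continuous => g.
  have -> : @germ_rng X G \o gclass g = sval g.
    by apply/funext => x; exact: germ_rng_gclass.
  exact: gelt_continuous.
- exact: gclass_continuous.
apply: germ_continuous => g.
have -> : @germ_inv X G \o gclass g = gclass (gel_inv g) \o sval g.
  by apply/funext => x; exact: germ_inv_gclass.
move=> x; apply: continuous_comp; [exact: gelt_continuous | exact: gclass_continuous].
Qed.

Lemma germ_effective : effective_groupoid (germ_gpd G).
Proof.
rewrite /effective_groupoid /= /germ_unit; apply/seteqP; split; last first.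
  move=> _ [x _ <-]; apply/germ_nbhsE; apply: nearW => y /=.
  by rewrite germ_src_gclass germ_rng_gclass.
move=> a; have [g [x ->]] := germ_ind a => /germ_nbhsE fixg.
exists x => //; apply/gclass_eq; split=> //.
by apply: filterS fixg => y /=; rewrite germ_src_gclass germ_rng_gclass.
Qed.

Lemma gclass_eq_supp g h x :
  gclass g x = gclass h x <-> ~ supp (sval (gel_comp (gel_inv h) g)) x.
Proof.
have [hK Kh] := gel_invK h.
rewrite gclass_eq notin_suppE; split=> [[_ gh] | fixed]; last split=> //.
  by apply: filterS gh => y /= ->; exact: hK.
by apply: filterS fixed => y /= /(congr1 (sval h)); rewrite Kh.
Qed.

Lemma germ_hausdorff : hausdorff_space X -> hausdorff_space (germ G).
Proof.
move=> hX a b; have [g [x ->]] := germ_ind a; have [h [y ->]] := germ_ind b.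
move=> gh_close; have xy : x = y.
  apply: hX => A B; rewrite -{1}(germ_src_gclass g x) -{1}(germ_src_gclass h y).
  move=> /germ_src_continuous nA /germ_src_continuous nB.
  by have [c [Ac Bc]] := gh_close _ _ nA nB; exists (germ_src c).
subst y; apply/gclass_eq_supp => supp_x.
set s := gel_comp (gel_inv h) g in supp_x.
have [_ _ open_supp] := sg_homeo_c (proj2_sig s).
have nS : nbhs x (supp (sval s)) by exact: open_nbhs_nbhs.
have [_ [[w Sw <-] [w' _ ghw]]] :=
  gh_close _ _ (open_map_gclass g nS) (open_map_gclass h nS).
by have /gclass_eq [ww' _] := ghw; move: ghw; rewrite ww' => /esym/gclass_eq_supp.
Qed.

Lemma germ_gpoid_obj : boolean_space X -> gpoid_obj (germ_gpd G).
Proof.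
move=> bX; split; [split=> //; split | exact: germ_effective |].
- exact: germ_is_groupoid.
- exact: germ_topological.
- exact: germ_src_local_homeo.
by apply: germ_hausdorff; case: bX.
Qed.

End GermGroupoid.

Definition equivariant (X1 X2 : topologicalType) (G1 : spatG X1) (G2 : spatG X2)
    (phi : X1 -> X2) : Prop :=
  forall g : gelt G1, exists g' : gelt G2, phi \o sval g = sval g' \o phi.

Lemma spatG_hom_equivariant (X1 X2 : topologicalType) (G1 : spatG X1)
    (G2 : spatG X2) (phi : X1 -> X2) :
  spatG_hom G1 G2 phi -> equivariant G1 G2 phi.
Proof.
move=> [_ lift] [g Gg]; have [g' [G'g' e]] := lift g Gg.
by exists (exist _ g' G'g').
Qed.

Lemma equivariant_id (X : topologicalType) (G : spatG X) : equivariant G G id.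
Proof. by move=> g; exists g. Qed.

Lemma equivariant_comp (X1 X2 X3 : topologicalType) (G1 : spatG X1)
    (G2 : spatG X2) (G3 : spatG X3) (phi : X1 -> X2) (psi : X2 -> X3) :
  equivariant G1 G2 phi -> equivariant G2 G3 psi -> equivariant G1 G3 (psi \o phi).
Proof.
move=> ephi epsi g; have [g' e'] := ephi g; have [g'' e''] := epsi g'.
by exists g''; exact: intertwine_trans e' e''.
Qed.

Section GermMap.
Variables (X1 X2 : topologicalType) (G1 : spatG X1) (G2 : spatG X2).
Variable phi : X1 -> X2.
Hypotheses (phi_open : open_map phi) (phi_equivariant : equivariant G1 G2 phi).

Lemma germ_mapE (g : gelt G1) (g' : gelt G2) x :
  phi \o sval g = sval g' \o phi ->
  germ_map G1 G2 phi (gclass g x) = gclass g' (phi x).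
Proof.
move=> e; rewrite /germ_map; have [-> eg] := grep_gclass g x.
case: pselect => [? | []]; last exact: phi_equivariant.
case: cid => k' /= e'; apply/gclass_eq; split=> //.
apply: near_open_map phi_open _; apply: filterS eg => y eky.
by have /= := congr1 (@^~ y) e'; have /= := congr1 (@^~ y) e; rewrite eky => <- <-.
Qed.

End GermMap.

Section GermMapEtale.
Variables (X1 X2 : topologicalType) (G1 : spatG X1) (G2 : spatG X2).
Variable phi : X1 -> X2.
Hypotheses (phi_local : local_homeo phi) (phi_equivariant : equivariant G1 G2 phi).

Let phi_open : open_map phi. Proof. by have /local_homeoP [] := phi_local. Qed.

Lemma germ_map_gpd_hom : gpd_hom (germ_gpd G1) (germ_gpd G2) (germ_map G1 G2 phi).
Proof.
move=> a b /=; have [g [x ->]] := germ_ind a; have [h [y ->]] := germ_ind b.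
rewrite germ_src_gclass germ_rng_gclass => ->.
have [g' eg] := phi_equivariant g; have [h' eh] := phi_equivariant h.
have ehy : sval h' (phi y) = phi (sval h y) by rewrite -[LHS]/((_ \o phi) y) -eh.
rewrite (germ_mapE phi_open phi_equivariant _ eg).
rewrite (germ_mapE phi_open phi_equivariant _ eh).
rewrite germ_src_gclass germ_rng_gclass ehy; split=> //.
rewrite !germ_mul_gclass //; apply: germ_mapE => //.
exact: intertwine_comp.
Qed.

Lemma germ_map_local_homeo : local_homeo (germ_map G1 G2 phi).
Proof.
have /local_homeoP [phi_cont _ phi_inj] := phi_local.
have chart g : exists g', germ_map G1 G2 phi \o gclass g = gclass g' \o phi.
  have [g' e] := phi_equivariant g; exists g'; apply/funext => x /=.
  exact: germ_mapE.
apply/local_homeoP; split.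
- apply: germ_continuous => g; have [g' ->] := chart g.
  by move=> x; apply: continuous_comp; [exact: phi_cont | exact: gclass_continuous].
- apply: germ_open_map => g; have [g' ->] := chart g.
  exact: open_map_comp phi_open (open_map_gclass g').
move=> a; have [g [x ->]] := germ_ind a; have [g' eg] := phi_equivariant g.
have [U [oU Ux phiU]] := phi_inj x.
exists (gclass g @` U); split; first exact: open_map_open (open_map_gclass g) oU.
  by exists x.
move=> b c /set_mem [y Uy <-] /set_mem [z Uz <-].
rewrite !(germ_mapE phi_open phi_equivariant _ eg) => /gclass_eq [phiyz _].
by rewrite (phiU y z) ?inE.
Qed.

End GermMapEtale.

Lemma spatG_hom_open_map (X1 X2 : topologicalType) (G1 : spatG X1)
    (G2 : spatG X2) (phi : X1 -> X2) :
  spatG_hom G1 G2 phi -> open_map phi.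
Proof. by case=> /local_homeoP []. Qed.

Theorem proposition5p3 :
  (* Germ sends objects of SpatG to objects of Gpoid *)
  (forall (X : topologicalType) (G : spatG X),
     boolean_space X -> gpoid_obj (germ_gpd G)) /\
  (* Germ(phi) is well defined and an etale homomorphism *)
  (forall (X1 X2 : topologicalType) (G1 : spatG X1) (G2 : spatG X2)
          (phi : X1 -> X2),
     boolean_space X1 -> boolean_space X2 -> spatG_hom G1 G2 phi ->
     (forall (g : gelt G1) (g' : gelt G2) (x : X1),
        phi \o sval g = sval g' \o phi ->
        germ_map G1 G2 phi (gclass g x) = gclass g' (phi x)) /\
     etale_hom (germ_gpd G1) (germ_gpd G2) (germ_map G1 G2 phi)) /\
  (* preservation of identities *)
  (forall (X : topologicalType) (G : spatG X),
     boolean_space X -> germ_map G G id = id) /\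
  (* preservation of composition *)
  (forall (X1 X2 X3 : topologicalType) (G1 : spatG X1) (G2 : spatG X2)
          (G3 : spatG X3) (phi : X1 -> X2) (psi : X2 -> X3),
     boolean_space X1 -> boolean_space X2 -> boolean_space X3 ->
     spatG_hom G1 G2 phi -> spatG_hom G2 G3 psi ->
     germ_map G1 G3 (psi \o phi) = germ_map G2 G3 psi \o germ_map G1 G2 phi).
Proof.
split; first by move=> X G; exact: germ_gpoid_obj.
split.
  move=> X1 X2 G1 G2 phi _ _ hphi; have [phi_local _] := hphi.
  have phi_open := spatG_hom_open_map hphi.
  have phi_eq := spatG_hom_equivariant hphi.
  split; first by move=> g g' x; exact: germ_mapE.
  by split; [exact: germ_map_gpd_hom | exact: germ_map_local_homeo].
split.
  move=> X G _; apply/funext => a; have [g [x ->]] := germ_ind a.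
  exact: (germ_mapE (@open_map_id X) (@equivariant_id _ G) x (erefl (sval g))).
move=> X1 X2 X3 G1 G2 G3 phi psi _ _ _ hphi hpsi.
have [phi_open psi_open] := (spatG_hom_open_map hphi, spatG_hom_open_map hpsi).
have [phi_eq psi_eq] := (spatG_hom_equivariant hphi, spatG_hom_equivariant hpsi).
apply/funext => a; have [g [x ->]] := germ_ind a.
have [g' eg] := phi_eq g; have [g'' eg'] := psi_eq g'.
rewrite (germ_mapE (open_map_comp phi_open psi_open) (equivariant_comp phi_eq psi_eq)
  x (intertwine_trans eg eg')) /=.
by rewrite (germ_mapE phi_open phi_eq _ eg) (germ_mapE psi_open psi_eq _ eg').
Qed.
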